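(* Let $\Gamma_1$ and $\Gamma_2$ be two metric theories built over a finite alphabet $\mathcal{A}$. Then $\Gamma_1$ and $\Gamma_2$ are strongly equivalent if and only if $\Gamma_1$ and $\Gamma_2$ are MHT-equivalent (i.e. have exactly the same MHT models).
   Context: Write $[m,n)=\{i\in\mathbb{N}\mid m\le i<n\}$, $(m,n]=\{i\in\mathbb{N}\mid m<i\le n\}$. Metric formulas over $\mathcal{A}$: $\varphi::=p\mid\bot\mid\varphi_1\wedge\varphi_2\mid\varphi_1\vee\varphi_2\mid\varphi_1\to\varphi_2\mid\bullet_I\varphi\mid\varphi_1\mathsf{S}_I\varphi_2\mid\varphi_1\mathsf{T}_I\varphi_2\mid\circ_I\varphi\mid\varphi_1\mathsf{U}_I\varphi_2\mid\varphi_1\mathsf{R}_I\varphi_2$, $p\in\mathcal{A}$, $I=[m,n)$ with $m\in\mathbb{N}$, $n\in\mathbb{N}\cup\{\omega\}$; a metric theory is a (possibly infinite) set of metric formulas. A timed HT-trace of length $\lambda\in\mathbb{N}\cup\{\omega\}$ is $\mathbf{M}=(\langle\mathbf{H},\mathbf{T}\rangle,\tau)$ with $H_i\subseteq T_i\subseteq\mathcal{A}$ for $i\in[0,\lambda)$ and $\tau:[0,\lambda)\to\mathbb{N}$, $\tau(0)=0$, $\tau(i)\le\tau(i+1)$. Standing assumption: all timed traces are strict, i.e. $\tau(i)<\tau(i+1)$ whenever $i+1<\lambda$. Satisfaction at $k\in[0,\lambda)$: $\bot$ never; $p$ iff $p\in H_k$; $\wedge,\vee$ as usual; $\varphi\to\psi$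 iff for both $\mathbf{M}'=\mathbf{M}$ and $\mathbf{M}'=(\langle\mathbf{T},\mathbf{T}\rangle,\tau)$, $\mathbf{M}',k\not\models\varphi$ or $\mathbf{M}',k\models\psi$; $\bullet_I\varphi$ iff $k>0$, $\mathbf{M},k-1\models\varphi$, $\tau(k)-\tau(k-1)\in I$; $\varphi\mathsf{S}_I\psi$ iff for some $j\in[0,k]$ with $\tau(k)-\tau(j)\in I$, $\mathbf{M},j\models\psi$ and $\mathbf{M},i\models\varphi$ for all $i\in(j,k]$; $\varphi\mathsf{T}_I\psi$ iff for all $j\in[0,k]$ with $\tau(k)-\tau(j)\in I$, $\mathbf{M},j\models\psi$ or $\mathbf{M},i\models\varphi$ for some $i\in(j,k]$; $\circ_I\varphi$ iff $k+1<\lambda$, $\mathbf{M},k+1\models\varphi$, $\tau(k+1)-\tau(k)\in I$; $\varphi\mathsf{U}_I\psi$ iff for some $j\in[k,\lambda)$ with $\tau(j)-\tau(k)\in I$, $\mathbf{M},j\models\psi$ and $\mathbf{M},i\models\varphi$ for all $i\in[k,j)$; $\varphi\mathsf{R}_I\psi$ iff for all $j\in[k,\lambda)$ with $\tau(j)-\tau(k)\in I$, $\mathbf{M},j\models\psi$ or $\mathbf{M},i\models\varphi$ for some $i\in[k,j)$. An MHT model of a theory $\Gamma$ is a timed HT-trace $\mathbf{M}$ (of any length) with $\mathbf{M},0\models\varphi$ for all $\varphi\in\Gamma$; $\mathrm{MHT}(\Gamma)$ is the set of them. A total trace $(\langle\mathbf{T},\mathbf{T}\rangle,\tau)\in\mathrm{MHT}(\Gamma)$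 is a metric equilibrium model of $\Gamma$ if there is no $\mathbf{H}<\mathbf{T}$ (i.e. $H_i\subseteq T_i$ for all $i$ and $\mathbf{H}\neq\mathbf{T}$) with $(\langle\mathbf{H},\mathbf{T}\rangle,\tau)\in\mathrm{MHT}(\Gamma)$; $\mathrm{MEL}(\Gamma)$ denotes the set of these. $\Gamma_1,\Gamma_2$ are strongly equivalent if $\mathrm{MEL}(\Gamma_1\cup\Delta)=\mathrm{MEL}(\Gamma_2\cup\Delta)$ for every metric theory $\Delta$. *)

From mathcomp Require Import all_boot.
Set Implicit Arguments.
Unset Strict Implicit.
Unset Printing Implicit Defensive.

(* Extended naturals N ∪ {ω}: [Some n] is n, [None] is ω. *)
Definition enat := option nat.

Definition lt_enat (i : nat) (l : enat) : Prop :=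
  match l with Some n => i < n | None => True end.

Record interval := Intv { ilo : nat; ihi : enat }.

Definition in_intv (I : interval) (d : nat) : Prop :=
  ilo I <= d /\ lt_enat d (ihi I).

Section Formulas.
Variable A : finType.

Inductive mformula : Type :=
| MAtom of A
| MBot
| MAnd of mformula & mformula
| MOr of mformula & mformula
| MImp of mformula & mformula
| MPrev of interval & mformula
| MSince of interval & mformula & mformula
| MTrigger of interval & mformula & mformula
| MNext of interval & mformula
| MUntil of interval & mformula & mformula
| MRelease of interval & mformula & mformula .

Definition theory := mformula -> Prop.

Definition tunion (G D : theory) : theory := fun f => G f \/ D f.

(* Timed HT-trace (⟨H,T⟩, τ) of length λ; values at indices ≥ λ are irrelevant. *)
Record htrace := HTrace {
  tlen : enat;
  tH : nat -> {set A};
  tT : nat -> {set A};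
  ttau : nat -> nat }.

(* Well-formedness: λ ≥ 1 (so that τ(0) is defined), H_i ⊆ T_i on [0,λ),
   τ(0) = 0 and τ strictly increasing (standing strictness assumption). *)
Definition valid_trace (M : htrace) : Prop :=
  [/\ lt_enat 0 (tlen M),
      (forall i, lt_enat i (tlen M) -> tH M i \subset tT M i),
      ttau M 0 = 0 &
      (forall i, lt_enat i.+1 (tlen M) -> ttau M i < ttau M i.+1)].

Fixpoint msat (l : enat) (H T : nat -> {set A}) (tau : nat -> nat)
    (k : nat) (f : mformula) {struct f} : Prop :=
  match f with
  | MAtom p => p \in H k
  | MBot => False
  | MAnd f1 f2 => msat l H T tau k f1 /\ msat l H T tau k f2
  | MOr f1 f2 => msat l H T tau k f1 \/ msat l H T tau k f2
  | MImp f1 f2 =>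
      (msat l H T tau k f1 -> msat l H T tau k f2) /\
      (msat l T T tau k f1 -> msat l T T tau k f2)
  | MPrev J g =>
      0 < k /\ msat l H T tau k.-1 g /\ in_intv J (tau k - tau k.-1)
  | MSince J f1 f2 =>
      exists j, [/\ j <= k, in_intv J (tau k - tau j), msat l H T tau j f2 &
                   forall i, j < i -> i <= k -> msat l H T tau i f1]
  | MTrigger J f1 f2 =>
      forall j, j <= k -> in_intv J (tau k - tau j) ->
        msat l H T tau j f2 \/
        exists i, [/\ j < i, i <= k & msat l H T tau i f1]
  | MNext J g =>
      lt_enat k.+1 l /\ msat l H T tau k.+1 g /\ in_intv J (tau k.+1 - tau k)
  | MUntil J f1 f2 =>
      exists j, [/\ k <= j, lt_enat j l, in_intv J (tau j - tau k),
                   msat l H T tau j f2 &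
                   forall i, k <= i -> i < j -> msat l H T tau i f1]
  | MRelease J f1 f2 =>
      forall j, k <= j -> lt_enat j l -> in_intv J (tau j - tau k) ->
        msat l H T tau j f2 \/
        exists i, [/\ k <= i, i < j & msat l H T tau i f1]
  end.

Definition sat (M : htrace) (k : nat) (f : mformula) : Prop :=
  msat (tlen M) (tH M) (tT M) (ttau M) k f.

Definition MHT (G : theory) (M : htrace) : Prop :=
  valid_trace M /\ forall f, G f -> sat M 0 f.

Definition hlt (l : enat) (H T : nat -> {set A}) : Prop :=
  (forall i, lt_enat i l -> H i \subset T i) /\
  exists i, lt_enat i l /\ H i != T i.

Definition MEL (G : theory) (M : htrace) : Prop :=
  MHT G M /\ (forall i, lt_enat i (tlen M) -> tH M i = tT M i) /\
  ~ (exists H', hlt (tlen M) H' (tT M) /\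
        MHT G (HTrace (tlen M) H' (tT M) (ttau M))).

Definition strongly_equivalent (G1 G2 : theory) : Prop :=
  forall D : theory, forall M, MEL (tunion G1 D) M <-> MEL (tunion G2 D) M.

Definition MHT_equivalent (G1 G2 : theory) : Prop :=
  forall M, MHT G1 M <-> MHT G2 M.

End Formulas.

(* (=>): let (<H,T>, tau) be an MHT model of G1.  By persistence its total trace
   is one as well, and adding the facts o^i p for p in T_i leaves the total trace
   as the only possible equilibrium model of G1 plus these facts; strong
   equivalence then makes it an MHT model of G2.  Next add instead the facts
   o^i p for p in H_i together with all implications o^i p -> o^j q between atoms
   of T \ H: every MHT model <K,T> of G2 plus these formulas has K = H or K = T.
   So if <H,T> were not a model of G2, the total trace would be an equilibrium
   model for G2 but not for G1, where <H,T> itself is a smaller model.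
   (<=): equilibrium models are defined from MHT models alone. *)
From mathcomp Require Import all_boot.
From Stdlib Require Import Classical.

Set Implicit Arguments.
Unset Strict Implicit.
Unset Printing Implicit Defensive.

Lemma lt_enat_le (i j : nat) (l : enat) : i <= j -> lt_enat j l -> lt_enat i l.
Proof. by case: l => [n|] //= hij; apply: leq_ltn_trans. Qed.

Lemma lt_enat_pred (k : nat) (l : enat) : lt_enat k l -> lt_enat k.-1 l.
Proof. exact/lt_enat_le/leq_pred. Qed.

Definition nextn (A : finType) (n : nat) (f : mformula A) : mformula A :=
  iter n (MNext (Intv 0 None)) f.

Section Satisfaction.
Variables (A : finType) (l : enat) (T : nat -> {set A}) (tau : nat -> nat).

Lemma msat_eq_on (f : mformula A) (H H' : nat -> {set A}) (k : nat) :
  (forall i, lt_enat i l -> H i = H' i) -> lt_enat k l ->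
  msat l H T tau k f -> msat l H' T tau k f.
Proof.
elim: f H H' k => [p||f1 IH1 f2 IH2|f1 IH1 f2 IH2|f1 IH1 f2 IH2|J g IH
  |J f1 IH1 f2 IH2|J f1 IH1 f2 IH2|J g IH|J f1 IH1 f2 IH2|J f1 IH1 f2 IH2]
  H H' k hH hk /=.
- by rewrite hH.
- by [].
- by case=> [h1 h2]; split; [exact: IH1 h1|exact: IH2 h2].
- by case=> [h1|h2]; [left; exact: IH1 h1|right; exact: IH2 h2].
- (* The antecedent is transported backwards, hence the induction over all H, H'. *)
  have hH' i (hi : lt_enat i l) : H' i = H i by rewrite hH.
  by case=> [h12 hT]; split=> // h1; apply: IH2 hH hk (h12 (IH1 _ _ _ hH' hk h1)).
- by case=> [k0 [hg hJ]]; split=> //; split=> //; exact: IH hH (lt_enat_pred hk) hg.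
- case=> j [hj hJ h2 h1]; exists j; split=> //; first exact: IH2 hH (lt_enat_le hj hk) h2.
  by move=> i hi hik; apply: IH1 hH (lt_enat_le hik hk) (h1 i hi hik).
- move=> h j hj hJ; case: (h j hj hJ) => [h2|[i [hi hik h1]]].
    by left; exact: IH2 hH (lt_enat_le hj hk) h2.
  by right; exists i; split=> //; exact: IH1 hH (lt_enat_le hik hk) h1.
- by case=> [hl [hg hJ]]; split=> //; split=> //; exact: IH hH hl hg.
- case=> j [hj hl hJ h2 h1]; exists j; split=> //; first exact: IH2 hH hl h2.
  by move=> i hi hij; apply: IH1 hH (lt_enat_le (ltnW hij) hl) (h1 i hi hij).
- move=> h j hj hl hJ; case: (h j hj hl hJ) => [h2|[i [hi hij h1]]].
    by left; exact: IH2 hH hl h2.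
  by right; exists i; split=> //; exact: IH1 hH (lt_enat_le (ltnW hij) hl) h1.
Qed.

Lemma msat_persist (f : mformula A) (H : nat -> {set A}) (k : nat) :
  (forall i, lt_enat i l -> H i \subset T i) -> lt_enat k l ->
  msat l H T tau k f -> msat l T T tau k f.
Proof.
move=> hHT; elim: f k => [p||f1 IH1 f2 IH2|f1 IH1 f2 IH2|f1 IH1 f2 IH2|J g IH
  |J f1 IH1 f2 IH2|J f1 IH1 f2 IH2|J g IH|J f1 IH1 f2 IH2|J f1 IH1 f2 IH2]
  k hk /=.
- exact: subsetP (hHT k hk) p.
- by [].
- by case=> [h1 h2]; split; [exact: IH1 h1|exact: IH2 h2].
- by case=> [h1|h2]; [left; exact: IH1 h1|right; exact: IH2 h2].
- by case=> [_ hT].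
- by case=> [k0 [hg hJ]]; split=> //; split=> //; exact: IH (lt_enat_pred hk) hg.
- case=> j [hj hJ h2 h1]; exists j; split=> //; first exact: IH2 (lt_enat_le hj hk) h2.
  by move=> i hi hik; apply: IH1 (lt_enat_le hik hk) (h1 i hi hik).
- move=> h j hj hJ; case: (h j hj hJ) => [h2|[i [hi hik h1]]].
    by left; exact: IH2 (lt_enat_le hj hk) h2.
  by right; exists i; split=> //; exact: IH1 (lt_enat_le hik hk) h1.
- by case=> [hl [hg hJ]]; split=> //; split=> //; exact: IH hl hg.
- case=> j [hj hl hJ h2 h1]; exists j; split=> //; first exact: IH2 hl h2.
  by move=> i hi hij; apply: IH1 (lt_enat_le (ltnW hij) hl) (h1 i hi hij).
- move=> h j hj hl hJ; case: (h j hj hl hJ) => [h2|[i [hi hij h1]]].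
    by left; exact: IH2 hl h2.
  by right; exists i; split=> //; exact: IH1 (lt_enat_le (ltnW hij) hl) h1.
Qed.

Lemma msat_nextn (H : nat -> {set A}) (f : mformula A) (n k : nat) :
  lt_enat k l ->
  msat l H T tau k (nextn n f) <-> lt_enat (k + n) l /\ msat l H T tau (k + n) f.
Proof.
elim: n k => [|n IHn] k hk; first by rewrite addn0; split=> [|[]].
rewrite /nextn iterS -/(nextn n f) /= -addSnnS.
split=> [[hl [hf _]]|[hl hf]]; first exact/(IHn _ hl).
have hl1 : lt_enat k.+1 l by apply: lt_enat_le hl; rewrite leq_addr.
by split=> //; split; [exact/IHn|].
Qed.

Lemma msat_nextn_atom (H : nat -> {set A}) (n : nat) (p : A) :
  lt_enat 0 l ->
  msat l H T tau 0 (nextn n (MAtom p)) <-> lt_enat n l /\ p \in H n.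
Proof. by move=> h0; rewrite msat_nextn. Qed.

End Satisfaction.

Arguments msat_nextn_atom {A l T tau H n p}.

Section NamingTheories.
Variables (A : finType) (l : enat).
Implicit Types (H K T : nat -> {set A}) (tau : nat -> nat).

Definition facts H : theory A :=
  fun f => exists i p, [/\ lt_enat i l, p \in H i & f = nextn i (MAtom p)].

Definition gap_links H T : theory A :=
  fun f => exists i p j q,
    [/\ lt_enat i l, lt_enat j l, p \in T i :\: H i, q \in T j :\: H j &
        f = MImp (nextn i (MAtom p)) (nextn j (MAtom q))].

Definition gap_closed H T K : Prop :=
  forall i p j q, lt_enat i l -> lt_enat j l -> p \in T i :\: H i ->
    q \in T j :\: H j -> p \in K i -> q \in K j.

Lemma msat_facts H K T tau : lt_enat 0 l ->
  (forall f, facts H f -> msat l K T tau 0 f) <->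
  (forall i, lt_enat i l -> H i \subset K i).
Proof.
move=> h0; split=> [hsat i hi|hHK _ [i [p [hi hp ->]]]].
  apply/subsetP => p hp.
  have /(msat_nextn_atom h0)[] // : msat l K T tau 0 (nextn i (MAtom p)).
  by apply: hsat; exists i, p.
by apply/(msat_nextn_atom h0); split=> //; exact: subsetP (hHK i hi) p hp.
Qed.

Lemma msat_gap_links H K T tau : lt_enat 0 l ->
  (forall f, gap_links H T f -> msat l K T tau 0 f) <-> gap_closed H T K.
Proof.
move=> h0; split=> [hsat i p j q hi hj hp hq hpK|hclosed].
  have [himp _] : msat l K T tau 0 (MImp (nextn i (MAtom p)) (nextn j (MAtom q))).
    by apply: hsat; exists i, p, j, q.
  by have /(msat_nextn_atom h0)[] := himp (proj2 (msat_nextn_atom h0) (conj hi hpK)).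
move=> _ [i [p [j [q [hi hj hp hq ->]]]]].
have hqT : q \in T j by case/setDP: hq.
split=> /(msat_nextn_atom h0) [_ hpi]; apply/(msat_nextn_atom h0); split=> //.
exact: hclosed hp hq hpi.
Qed.

Lemma gap_closed_dichotomy H K T :
  (forall i, lt_enat i l -> H i \subset K i) ->
  (forall i, lt_enat i l -> K i \subset T i) -> gap_closed H T K ->
  (forall i, lt_enat i l -> K i = H i) \/ (forall i, lt_enat i l -> K i = T i).
Proof.
move=> hHK hKT hclosed.
case: (classic (exists i p, lt_enat i l /\ p \in K i :\: H i)) => [[i [p [hi hp]]]|hnew].
  right=> j hj; apply/eqP; rewrite eqEsubset hKT //=; apply/subsetP => q hqT.
  case hqH: (q \in H j); first exact: subsetP (hHK j hj) q hqH.
  case/setDP: hp => hpK hpH.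
  have hpT : p \in T i :\: H i by rewrite inE hpH (subsetP (hKT i hi) p hpK).
  by apply: hclosed hi hj hpT _ hpK; rewrite inE hqH hqT.
left=> j hj; apply/eqP; rewrite eqEsubset hHK // andbT; apply/subsetP => p hp.
case hpH: (p \in H j) => //; case: hnew; exists j, p; by rewrite inE hpH hp.
Qed.

Lemma msat_facts_gap_links H K T tau : lt_enat 0 l ->
  (forall f, tunion (facts H) (gap_links H T) f -> msat l K T tau 0 f) <->
  (forall i, lt_enat i l -> H i \subset K i) /\ gap_closed H T K.
Proof.
move=> h0; rewrite -(msat_facts H K T tau h0) -(msat_gap_links H K T tau h0).
split=> [hsat|[hf hg] f [hfact|hgap]]; last exact: hg; last exact: hf.
by split=> f hf; apply: hsat; [left|right].
Qed.

End NamingTheories.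

Arguments msat_facts {A l H K T tau}.
Arguments msat_facts_gap_links {A l H K T tau}.

Section Models.
Variable A : finType.
Implicit Types (G D : theory A) (M : htrace A) (H K T : nat -> {set A}).

Lemma MHT_tunion G D M :
  MHT (tunion G D) M <-> MHT G M /\ forall f, D f -> sat M 0 f.
Proof.
split=> [[hv hGD]|[[hv hG] hD]].
  by split; [split=> // f hf|move=> f hf]; apply: hGD; [left|right].
by split=> // f [hf|hf]; [exact: hG|exact: hD].
Qed.

Lemma MHT_equivalent_tunion G1 G2 D :
  MHT_equivalent G1 G2 -> MHT_equivalent (tunion G1 D) (tunion G2 D).
Proof. by move=> hE M; rewrite !MHT_tunion hE. Qed.

Lemma MEL_MHT_equivalent G1 G2 M : MHT_equivalent G1 G2 -> MEL G1 M <-> MEL G2 M.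
Proof.
move=> hE; have hE' N : MHT G1 N <-> MHT G2 N := hE N.
by rewrite /MEL; setoid_rewrite hE'.
Qed.

Lemma MHT_persist G l H T tau :
  MHT G (HTrace l H T tau) -> MHT G (HTrace l T T tau).
Proof.
case=> [[h0 hHT h1 h2] hG]; split=> [|f hf]; first by split.
exact: msat_persist hHT h0 (hG f hf).
Qed.

Lemma MHT_eq_on G l H K T tau : (forall i, lt_enat i l -> H i = K i) ->
  MHT G (HTrace l H T tau) -> MHT G (HTrace l K T tau).
Proof.
move=> hHK [[h0 hHT h1 h2] hG]; split=> [|f hf].
  by split=> // i hi /=; rewrite -hHK ?hHT.
exact: msat_eq_on hHK h0 (hG f hf).
Qed.

Lemma MEL_total G l T tau : MHT G (HTrace l T T tau) ->
  (forall K, (forall i, lt_enat i l -> K i \subset T i) ->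
     MHT G (HTrace l K T tau) -> forall i, lt_enat i l -> K i = T i) ->
  MEL G (HTrace l T T tau).
Proof.
move=> hT hmin; split=> //; split=> // [[K [[hKT [i [hi hne]]] hK]]].
by move/eqP: hne; apply; exact: hmin hKT hK i hi.
Qed.

Lemma hlt_neq l H T : (forall i, lt_enat i l -> H i \subset T i) ->
  ~ (forall i, lt_enat i l -> H i = T i) -> hlt l H T.
Proof.
move=> hHT hne; split=> //; apply: NNPP => hall; apply: hne => i hi.
by apply/eqP/negP => hneq; apply: hall; exists i; split=> //; exact/negP.
Qed.

End Models.

Section StrongEquivalence.
Variables (A : finType) (G1 G2 : theory A).
Hypothesis hSE : strongly_equivalent G1 G2.

Lemma strongly_equivalent_MHT_total l T tau :
  MHT G1 (HTrace l T T tau) -> MHT G2 (HTrace l T T tau).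
Proof.
move=> hT1; have [[h0 _ _ _] _] := hT1.
have hMEL1 : MEL (tunion G1 (facts l T)) (HTrace l T T tau).
  apply: MEL_total => [|K hKT]; rewrite MHT_tunion.
    by split=> //; apply/msat_facts.
  case=> _ /(msat_facts h0) hTK i hi.
  by apply/eqP; rewrite eqEsubset hKT ?hTK.
by have [/MHT_tunion[]] := proj1 (hSE _ _) hMEL1.
Qed.

Lemma strongly_equivalent_MHT M : MHT G1 M -> MHT G2 M.
Proof.
case: M => l H T tau hM1; have [[h0 hHT _ _] _] := hM1.
have hT2 := strongly_equivalent_MHT_total (MHT_persist hM1).
apply: NNPP => hM2.
pose D := tunion (facts l H) (gap_links l H T).
have hMEL2 : MEL (tunion G2 D) (HTrace l T T tau).
  apply: MEL_total => [|K hKT]; rewrite MHT_tunion.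
    split=> //; apply/msat_facts_gap_links => //; split=> // i p j q _ _ _.
    by case/setDP.
  case=> hK2 /(msat_facts_gap_links h0) [hHK hclosed].
  case: (gap_closed_dichotomy hHK hKT hclosed) => // hKH.
  by case: hM2; apply: MHT_eq_on hKH hK2.
have [_ [_ hmin]] := proj2 (hSE _ _) hMEL2.
apply: hmin; exists H; split.
  apply: hlt_neq => // hHT_eq; apply: hM2.
  by apply: MHT_eq_on hT2 => i hi; rewrite hHT_eq.
rewrite MHT_tunion; split=> //; apply/msat_facts_gap_links => //.
by split=> // i p j q _ _ /setDP[_ /negP].
Qed.

End StrongEquivalence.

Theorem theorem4 (A : finType) (G1 G2 : theory A) :
  strongly_equivalent G1 G2 <-> MHT_equivalent G1 G2.
Proof.
split=> [hSE M|hE D M]; last exact/MEL_MHT_equivalent/MHT_equivalent_tunion.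
split; first exact: strongly_equivalent_MHT.
by apply: strongly_equivalent_MHT => // D N; apply: iff_sym.
Qed.
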